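(* Let $n\ge1$, let $p$ be a prime, and let $L(\mathbf{X})=\sum_{i,j=1}^n a_{ij}x_{ij}\in\mathbb{Z}[\mathbf{X}]$ be a linear form in the $n^2$ variables $\mathbf{X}=(x_{ij})_{i,j=1}^n$ which does not vanish modulo $p$ (i.e. not all $a_{ij}$ are divisible by $p$). Then \[ S_{p^2}(L)=\sum_{\substack{\mathbf{X}\in\mathbb{Z}_{p^2}^{n\times n}\\ \det\mathbf{X}\equiv0 \bmod p^2}}\exp\left(2\pi i\,L(\mathbf{X})/p^2\right)\ll p^{2n^2-(n+3)/2}, \] where the implied constant depends only on $n$.
   Context: $\mathbb{Z}_{m}$ denotes the residue ring modulo $m$, represented by $\{0,\dots,m-1\}$. *)

From HB Require Import structures.
From mathcomp Require Import all_boot all_order all_algebra.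
From mathcomp Require Import reals trigo exp.
Set Implicit Arguments. Unset Strict Implicit. Unset Printing Implicit Defensive.
Import Order.TTheory GRing.Theory Num.Theory.
Local Open Scope ring_scope.

Definition intmx (m n : nat) (X : 'M['I_m]_n) : 'M[int]_n :=
  map_mx (fun x : 'I_m => (nat_of_ord x)%:Z) X.

Definition linform (n : nat) (a X : 'M[int]_n) : int :=
  \sum_(i < n) \sum_(j < n) a i j * X i j.

(* Real and imaginary parts of
   S_{p^2}(L) = sum_{X in Z_{p^2}^{n x n}, det X = 0 mod p^2} e(L(X)/p^2),
   with e(t) = exp(2 pi i t) = cos(2 pi t) + i sin(2 pi t). *)
Definition Sp2_re (R : realType) (n p : nat) (a : 'M[int]_n) : R :=
  \sum_(X : 'M['I_(p ^ 2)]_n | ((p ^ 2)%:Z %| \det (intmx X))%Z)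
     cos (2 * pi * ((linform a (intmx X))%:~R / (p ^ 2)%:R)).

Definition Sp2_im (R : realType) (n p : nat) (a : 'M[int]_n) : R :=
  \sum_(X : 'M['I_(p ^ 2)]_n | ((p ^ 2)%:Z %| \det (intmx X))%Z)
     sin (2 * pi * ((linform a (intmx X))%:~R / (p ^ 2)%:R)).

Definition Sp2_abs (R : realType) (n p : nat) (a : 'M[int]_n) : R :=
  Num.sqrt (@Sp2_re R n p a ^+ 2 + @Sp2_im R n p a ^+ 2).

From HB Require Import structures.
From mathcomp Require Import all_boot all_order all_algebra.
From mathcomp Require Import reals trigo exp complex ring lra zify.
From Stdlib Require Import Lia.
Set Implicit Arguments. Unset Strict Implicit. Unset Printing Implicit Defensive.
Import Order.TTheory GRing.Theory Num.Theory.
Local Open Scope ring_scope.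

(* Over Z/p^2 the element e = p satisfies e^2 = 0, so the twist
   Y |-> Y + e (V Y + Y W) = (1 + e V) Y (1 + e W) is a bijection that preserves
   det Y = 0 and shifts L(Y) by e L(V Y + Y W).  Averaging the sum over the twists
   by (v V, v W), v < p, therefore discards every Y with L(V Y + Y W) <> 0 mod p.
   Taking V = E_{i0 k} and W = E_{k j0} for all k, where p does not divide a_{i0 j0},
   the surviving Y have row i0 and column j0 determined mod p by the other entries,
   so at most p^(n^2) p^((n-1)^2) = p^(2n^2-2n+1) <= p^(2n^2-(n+3)/2) of them remain
   when n >= 2; for n = 1 only Y = 0 has det Y = 0. *)

Section ComplexExponential.
Variable R : realType.
Local Open Scope complex_scope.

Definition cis (t : R) : R[i] := cos t +i* sin t.

Lemma cisD (s t : R) : cis (s + t) = cis s * cis t.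
Proof. by rewrite /cis cosD sinD; simpc; congr (_ +i* _); ring. Qed.

Lemma normr_cis (t : R) : `|cis t| = 1.
Proof. by rewrite normc_def /= cos2Dsin2 sqrtr1. Qed.

Lemma sum_complex (I : finType) (P : pred I) (f g : I -> R) :
  \sum_(i | P i) (f i +i* g i) = (\sum_(i | P i) f i) +i* (\sum_(i | P i) g i).
Proof. by apply: (big_rec3 (fun a b c => a = b +i* c)) => // i y1 y2 y3 _ ->. Qed.

Lemma cis_periodic (t : R) (k : int) : cis (t + 2 * pi * k%:~R) = cis t.
Proof.
have cisDn (s : R) (l : nat) : cis (s + 2 * pi * l%:R) = cis s.
  rewrite /cis mulr_natr mulr_natl.
  by rewrite (periodicn (@cosD2pi R)) (periodicn (@sinD2pi R)).
case: k => l; first exact: cisDn.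
by rewrite -(cisDn _ l.+1) NegzE intrN mulrN addrNK.
Qed.

Lemma cis_eq1 (t : R) : 0 < t < 2 * pi -> cis t != 1.
Proof.
move=> t_range; apply/negP => /eqP /(congr1 (@complex.Re R)).
have -> : t = (t / 2) *+ 2 by rewrite -mulr_natr divfK // pnatr_eq0.
have sin_gt0 : 0 < sin (t / 2) by apply: sin_gt0_pi; lra.
rewrite /= cos_mulr2n cos2sin2 mulr2n; nra.
Qed.

Definition zeta (m : nat) (k : int) : R[i] := cis (2 * pi * (k%:~R / m%:R)).

Lemma zetaD m (k l : int) : zeta m (k + l) = zeta m k * zeta m l.
Proof. by rewrite /zeta -cisD; congr cis; rewrite intrD; ring. Qed.

Lemma normr_zeta m (k : int) : `|zeta m k| = 1.
Proof. exact: normr_cis. Qed.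

Lemma zeta_mod m (k l : int) : (0 < m)%N -> (k = l %[mod m])%Z -> zeta m k = zeta m l.
Proof.
move=> m_gt0 /eqP; rewrite eqz_mod_dvd => /dvdzP [q kl].
have zeta_period : zeta m (q * m) = 1.
  rewrite /zeta intrM -pmulrn mulfK ?pnatr_eq0 -?lt0n //.
  by rewrite -[_ * _]add0r cis_periodic /cis cos0 sin0.
by rewrite -(subrK l k) kl zetaD zeta_period mul1r.
Qed.

Lemma zeta_eq1 m (r : nat) : (0 < r < m)%N -> zeta m r != 1.
Proof.
move=> /andP [r_gt0 r_lt_m]; apply: cis_eq1.
have m_gt0 : (0 : R) < m%:R by rewrite ltr0n (ltn_trans r_gt0).
have x_gt0 : (0 : R) < r%:R / m%:R by rewrite divr_gt0 // ltr0n.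
have x_lt1 : (r%:R / m%:R : R) < 1 by rewrite ltr_pdivrMr // mul1r ltr_nat.
have pi_pos := pi_gt0 R.
rewrite -pmulrn; nra.
Qed.

End ComplexExponential.

Section ZpCharacter.
Variable m : nat.
Hypothesis m_gt1 : (1 < m)%N.

Lemma Zp_intr_eq0 (z : int) : ((z%:~R : 'Z_m) == 0) = (m%:Z %| z)%Z.
Proof.
have m_neq0 : m%:Z != 0 by rewrite -lt0n ltnW.
rewrite {1}(divz_eq z m) rmorphD rmorphM /= -pmulrn pchar_Zp // mulr0 add0r.
have mod_ge0 := modz_ge0 z m_neq0.
have mod_lt : (`|(z %% m)%Z| < m)%N.
  by rewrite -ltz_nat gez0_abs // ltz_pmod // ltz_nat ltnW.
rewrite -(gez0_abs mod_ge0) -pmulrn.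
apply/eqP/dvdz_mod0P => [/(congr1 (@nat_of_ord _)) | ->]; last by [].
by rewrite val_Zp_nat // modn_small // => /eqP; rewrite absz_eq0 => /eqP.
Qed.

Variable R : realType.

Definition Zp_char (y : 'Z_m) : R[i] := zeta R m (y : nat).

Lemma Zp_char_intr (z : int) : Zp_char z%:~R = zeta R m z.
Proof.
apply: zeta_mod; first exact: ltnW.
apply/eqP; rewrite eqz_mod_dvd -Zp_intr_eq0 rmorphB /=.
by rewrite -pmulrn natr_Zp subrr.
Qed.

Lemma Zp_char_natr (k : nat) : Zp_char k%:R = zeta R m k.
Proof. by rewrite -Zp_char_intr. Qed.

Lemma Zp_charD (x y : 'Z_m) : Zp_char (x + y) = Zp_char x * Zp_char y.
Proof. by rewrite -[x]natr_Zp -[y]natr_Zp -natrD !Zp_char_natr PoszD zetaD. Qed.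

Lemma normr_Zp_char (y : 'Z_m) : `|Zp_char y| = 1.
Proof. exact: normr_zeta. Qed.

Lemma Zp_char0 : Zp_char 0 = 1.
Proof.
have char0_neq0 : Zp_char 0 != 0 by rewrite -normr_eq0 normr_Zp_char oner_eq0.
by apply: (mulfI char0_neq0); rewrite -Zp_charD addr0 mulr1.
Qed.

Lemma Zp_char_eq1 (y : 'Z_m) : (Zp_char y == 1) = (y == 0).
Proof.
apply/idP/eqP => [|->]; last by rewrite Zp_char0.
apply: contraTeq => y_neq0; apply: zeta_eq1.
have y_lt_m : (y < m)%N by rewrite -[X in (_ < X)%N](Zp_cast m_gt1) ltn_ord.
rewrite lt0n y_lt_m andbT.
by apply: contra y_neq0 => /eqP y0; apply/eqP/val_inj.
Qed.

End ZpCharacter.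

Lemma sum_expr_unity (F : idomainType) (z : F) (p : nat) : z ^+ p = 1 ->
  \sum_(v < p) z ^+ v = if z == 1 then p%:R else 0.
Proof.
move=> zp1; case: eqP => [-> | /eqP z_neq1].
  by rewrite (eq_bigr (fun _ => 1)) ?sumr_const ?card_ord // => v _; rewrite expr1n.
have : (z - 1) * \sum_(v < p) z ^+ v = 0 by rewrite -subrX1 zp1 subrr.
by move/eqP; rewrite mulf_eq0 subr_eq0 (negbTE z_neq1) => /eqP.
Qed.

Lemma sum_twist_restrict (F : numFieldType) (T : finType) (P : pred T) (f z : T -> F)
    (sigma : nat -> T -> T) (p : nat) :
  (0 < p)%N -> (forall v, injective (sigma v)) ->
  (forall v x, P (sigma v x) = P x) ->
  (forall v x, P x -> f (sigma v x) = f x * z x ^+ v) ->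
  (forall x, P x -> z x ^+ p = 1) ->
  \sum_(x | P x) f x = \sum_(x | P x && (z x == 1)) f x.
Proof.
(* Each sigma v reindexes the sum; summing over v < p, the geometric sums in z x
   vanish unless z x = 1. *)
move=> p_gt0 sigma_inj sigmaP sigma_f zp1.
have shift v : \sum_(x | P x) f x = \sum_(x | P x) f x * z x ^+ v.
  rewrite (reindex_inj (sigma_inj v)) /=.
  by under eq_bigl do rewrite sigmaP; apply: eq_bigr => x /sigma_f ->.
apply: (mulfI (_ : p%:R != 0)); first by rewrite pnatr_eq0 -lt0n.
rewrite [LHS]mulr_natl -[in LHS](card_ord p) -sumr_const.
transitivity (\sum_(v < p) \sum_(x | P x) f x * z x ^+ v).
  by apply: eq_bigr => v _; exact: shift.
rewrite exchange_big big_mkcondr mulr_sumr; apply: eq_bigr => x Px.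
rewrite -mulr_sumr sum_expr_unity ?zp1 //.
by case: (z x == 1); rewrite ?mulr0 // mulrC.
Qed.

Definition mxform (R : pzSemiRingType) n (A Y : 'M[R]_n) : R :=
  \sum_(i < n) \sum_(j < n) A i j * Y i j.

Lemma mxformD (R : pzSemiRingType) n (A Y Y' : 'M[R]_n) :
  mxform A (Y + Y') = mxform A Y + mxform A Y'.
Proof.
rewrite /mxform -big_split; apply: eq_bigr => i _.
by rewrite -big_split; apply: eq_bigr => j _; rewrite mxE mulrDr.
Qed.

Lemma mxformZ (R : comPzRingType) n (A Y : 'M[R]_n) c :
  mxform A (c *: Y) = c * mxform A Y.
Proof.
rewrite /mxform mulr_sumr; apply: eq_bigr => i _.
by rewrite mulr_sumr; apply: eq_bigr => j _; rewrite mxE mulrCA.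
Qed.

Lemma rmorph_mxform (R S : pzRingType) (f : {rmorphism R -> S}) n (A Y : 'M[R]_n) :
  f (mxform A Y) = mxform (map_mx f A) (map_mx f Y).
Proof.
rewrite rmorph_sum; apply: eq_bigr => i _; rewrite rmorph_sum.
by apply: eq_bigr => j _; rewrite rmorphM !mxE.
Qed.

Section DeltaForms.
Variables (R : comPzRingType) (n : nat) (A Y : 'M[R]_n).

Lemma delta_mulmxE (i0 k i j : 'I_n) :
  (delta_mx i0 k *m Y) i j = (i == i0)%:R * Y k j.
Proof.
rewrite mxE (bigD1 k) //= big1 => [|l l_neq]; last by rewrite mxE (negbTE l_neq) andbF mul0r.
by rewrite mxE eqxx andbT addr0.
Qed.

Lemma mulmx_deltaE (k j0 i j : 'I_n) :
  (Y *m delta_mx k j0) i j = Y i k * (j == j0)%:R.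
Proof.
rewrite mxE (bigD1 k) //= big1 => [|l l_neq]; last by rewrite mxE (negbTE l_neq) mulr0.
by rewrite mxE eqxx addr0.
Qed.

Lemma mxform_delta_mul (i0 k : 'I_n) :
  mxform A (delta_mx i0 k *m Y) = (Y *m (row i0 A)^T) k 0.
Proof.
rewrite /mxform (bigD1 i0) //= [X in _ + X]big1 => [|i i_neq]; last first.
  by apply: big1 => j _; rewrite delta_mulmxE (negbTE i_neq) mul0r mulr0.
rewrite mxE addr0; apply: eq_bigr => j _.
by rewrite delta_mulmxE eqxx mul1r !mxE mulrC.
Qed.

Lemma mxform_mul_delta (k j0 : 'I_n) :
  mxform A (Y *m delta_mx k j0) = ((col j0 A)^T *m Y) 0 k.
Proof.
rewrite /mxform mxE; apply: eq_bigr => i _.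
rewrite (bigD1 j0) //= big1 => [|j j_neq]; last by rewrite mulmx_deltaE (negbTE j_neq) !mulr0.
by rewrite mulmx_deltaE eqxx mulr1 addr0 !mxE.
Qed.

End DeltaForms.

Section Twist.
Variables (R : comNzRingType) (e : R) (n : nat).
Hypothesis e2 : e * e = 0.

Definition twist (V W Y : 'M[R]_n) : 'M[R]_n := Y + e *: (V *m Y + Y *m W).

Lemma twistE V W Y : twist V W Y = (1%:M + e *: V) *m Y *m (1%:M + e *: W).
Proof.
rewrite /twist mulmxDl mul1mx -scalemxAl mulmxDr mulmx1 mulmxDl.
by rewrite -!scalemxAr -scalemxAl scalerA e2 scale0r addr0 scalerDr addrA.
Qed.

Lemma twistK V W : cancel (twist V W) (twist (- V) (- W)).
Proof.
move=> Y; rewrite /twist mulNmx mulmxN -opprD scalerN mulmxDr mulmxDl.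
rewrite -!scalemxAl -!scalemxAr !scalerDr !scalerA e2 !scale0r !addr0.
by rewrite addrK.
Qed.

Lemma det_twist_eq0 V W Y : (\det (twist V W Y) == 0) = (\det Y == 0).
Proof.
have det0_twist V' W' Y' : \det Y' = 0 -> \det (twist V' W' Y') = 0.
  by move=> dY; rewrite twistE !det_mulmx dY mulr0 mul0r.
apply/eqP/eqP => [|/det0_twist //].
by move/(det0_twist (- V) (- W)); rewrite twistK.
Qed.

Lemma scale_twist V W Y : e *: twist V W Y = e *: Y.
Proof. by rewrite /twist scalerDr scalerA e2 scale0r addr0. Qed.

Lemma mxform_twist A V W Y :
  mxform A (twist V W Y) = mxform A Y + e * mxform A (V *m Y + Y *m W).
Proof. by rewrite /twist [LHS]mxformD mxformZ. Qed.

End Twist.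

Section TwistAverage.
Variables (R : finComNzRingType) (F : numFieldType) (e : R) (p : nat).
Variables (psi : R -> F) (n : nat) (A : 'M[R]_n).
Hypotheses (e2 : e * e = 0) (p_gt0 : (0 < p)%N) (ep : e *+ p = 0).
Hypotheses (psiD : forall x y, psi (x + y) = psi x * psi y)
  (psi_eq1 : forall y, (psi y == 1) = (y == 0)).

Definition twist_cond (t : 'M[R]_n * 'M[R]_n) (Y : 'M[R]_n) : bool :=
  e * mxform A (t.1 *m Y + Y *m t.2) == 0.

Lemma twist_cond_twist t V W Y : twist_cond t (twist e V W Y) = twist_cond t Y.
Proof.
have scale_cond M : e *: (t.1 *m M + M *m t.2) = t.1 *m (e *: M) + (e *: M) *m t.2.
  by rewrite scalerDr scalemxAr scalemxAl.
by rewrite /twist_cond -!mxformZ !scale_cond scale_twist.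
Qed.

Lemma psiMn x k : psi (x *+ k) = psi x ^+ k.
Proof.
elim: k => [|k IHk]; last by rewrite mulrS psiD IHk exprS.
by apply/eqP; rewrite mulr0n expr0 psi_eq1.
Qed.

Lemma sum_det0_twist_restrict (s : seq ('M[R]_n * 'M[R]_n)) :
  \sum_(Y | \det Y == 0) psi (mxform A Y) =
  \sum_(Y | (\det Y == 0) && all (twist_cond ^~ Y) s) psi (mxform A Y).
Proof.
elim: s => [|t s IHs]; first by apply: eq_bigl => Y; rewrite andbT.
pose c Y := e * mxform A (t.1 *m Y + Y *m t.2).
rewrite IHs (@sum_twist_restrict _ _ _ _ (fun Y => psi (c Y))
  (fun v => twist e (v%:R *: t.1) (v%:R *: t.2)) p) //.
- by apply: eq_bigl => Y; rewrite psi_eq1 /= -andbA; congr (_ && _); rewrite andbC.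
- by move=> v; apply: can_inj (twistK e2 _ _).
- move=> v Y; rewrite det_twist_eq0 //; congr (_ && _).
  by apply: eq_all => t'; apply: twist_cond_twist.
- move=> v Y _; rewrite mxform_twist // psiD -psiMn -scalemxAl -scalemxAr -scalerDr.
  by rewrite mxformZ /c mulrCA mulr_natl.
- by move=> Y _; rewrite -psiMn -mulrnAl ep mul0r; apply/eqP; rewrite psi_eq1.
Qed.

End TwistAverage.

Definition cross_twists {R : pzRingType} {n} (i0 j0 : 'I_n) : seq ('M[R]_n * 'M[R]_n) :=
  [seq (delta_mx i0 k, 0) | k <- enum 'I_n] ++ [seq (0, delta_mx k j0) | k <- enum 'I_n].

Lemma cross_mx_eq0 (F : fieldType) n (D : 'M[F]_n) (r : 'cV[F]_n) (c : 'rV[F]_n)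
    (i0 j0 : 'I_n) :
  r j0 0 != 0 -> c 0 i0 != 0 -> D *m r = 0 -> c *m D = 0 ->
  row' i0 (col' j0 D) = 0 -> D = 0.
Proof.
move=> r_neq0 c_neq0 Dr0 cD0 minor0.
have sum1 (f : 'I_n -> F) (k : 'I_n) : (forall l, l != k -> f l = 0) -> \sum_l f l = f k.
  by move=> fk0; rewrite (bigD1 k) //= big1 ?addr0.
have off (i j : 'I_n) : i != i0 -> j != j0 -> D i j = 0.
  case: (unliftP i0 i) => [i' -> _ | -> /eqP //]; case: (unliftP j0 j) => [j' -> _ | -> /eqP //].
  by have := congr1 (fun M : 'M_n.-1 => M i' j') minor0; rewrite !mxE.
have col0 (i : 'I_n) : i != i0 -> D i j0 = 0.
  move=> i_neq; have /eqP := congr1 (fun M : 'cV_n => M i 0) Dr0.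
  rewrite !mxE (sum1 _ j0) => [|j j_neq]; last by rewrite off ?mul0r.
  by rewrite mulf_eq0 (negbTE r_neq0) orbF => /eqP.
have row0 (j : 'I_n) : j != j0 -> D i0 j = 0.
  move=> j_neq; have /eqP := congr1 (fun M : 'rV_n => M 0 j) cD0.
  rewrite !mxE (sum1 _ i0) => [|i i_neq]; last by rewrite off ?mulr0.
  by rewrite mulf_eq0 (negbTE c_neq0) => /eqP.
apply/matrixP => i j; rewrite mxE.
case: (eqVneq i i0) => [-> | i_neq]; last first.
  by case: (eqVneq j j0) => [-> | j_neq]; [exact: col0 | exact: off].
case: (eqVneq j j0) => [-> | /row0 //].
have /eqP := congr1 (fun M : 'cV_n => M i0 0) Dr0.
rewrite !mxE (sum1 _ j0) => [|j' /row0 ->]; last by rewrite mul0r.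
by rewrite mulf_eq0 (negbTE r_neq0) orbF => /eqP.
Qed.

Section Residues.
Variables (p : nat) (n : nat).
Hypothesis p_pr : prime p.
Local Notation Z := 'Z_(p ^ 2).

Lemma p2_gt1 : (1 < p ^ 2)%N.
Proof. by rewrite (ltn_exp2l 0) ?prime_gt1. Qed.

Definition redp (y : Z) : 'F_p := (y : nat)%:R.

Lemma redp_natr k : redp k%:R = k%:R.
Proof.
rewrite /redp val_Zp_nat ?p2_gt1 // -(Fp_nat_mod p_pr) modn_dvdm ?Fp_nat_mod //.
by rewrite dvdn_exp.
Qed.

Lemma redp_is_zmod_morphism : {morph redp : x y / x - y}.
Proof.
have redpD (x y : Z) : redp (x + y) = redp x + redp y.
  by rewrite -[x]natr_Zp -[y]natr_Zp -natrD !redp_natr natrD.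
by move=> x y; rewrite -[in RHS](subrK y x) [in RHS]redpD addrK.
Qed.

Lemma redp_is_monoid_morphism : monoid_morphism redp.
Proof.
split=> [|x y]; first by rewrite -[1]/(1%:R : Z) redp_natr.
by rewrite -[x]natr_Zp -[y]natr_Zp -natrM !redp_natr natrM.
Qed.

HB.instance Definition _ := GRing.isZmodMorphism.Build Z 'F_p redp redp_is_zmod_morphism.
HB.instance Definition _ := GRing.isMonoidMorphism.Build Z 'F_p redp redp_is_monoid_morphism.

Lemma redp_eq0 (y : Z) : (redp y == 0) = (p%:R * y == 0).
Proof.
rewrite /redp -(dvdn_pcharf (pchar_Fp p_pr)) -[y in RHS]natr_Zp -natrM pmulrn.
have dvdn_p2 k : (p ^ 2 %| p * k)%N = (p %| k)%N.
  by rewrite -mulnn dvdn_pmul2l ?prime_gt0.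
by rewrite (Zp_intr_eq0 p2_gt1) dvdzE /= dvdn_p2.
Qed.

Lemma hidigit_subproof (y : Z) : (y %/ p < p)%N.
Proof.
by rewrite ltn_divLR ?prime_gt0 // mulnn -[X in (_ < X)%N](Zp_cast p2_gt1) ltn_ord.
Qed.

Definition hidigit (y : Z) : 'I_p := Ordinal (hidigit_subproof y).

Lemma redp_hidigit_inj (x y : Z) : redp x = redp y -> hidigit x = hidigit y -> x = y.
Proof.
move=> /(congr1 (@nat_of_ord _)); rewrite !(val_Fp_nat p_pr) => mod_eq.
move=> /(congr1 (@nat_of_ord _)) div_eq; apply: ord_inj.
by rewrite (divn_eq x p) (divn_eq y p) mod_eq; congr (_ * _ + _)%N.
Qed.

Lemma card_cross_kernel (r : 'cV['F_p]_n) (c : 'rV['F_p]_n) (i0 j0 : 'I_n) :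
  r j0 0 != 0 -> c 0 i0 != 0 ->
  (#|[pred Y : 'M[Z]_n | (map_mx redp Y *m r == 0%R) && (c *m map_mx redp Y == 0%R)]|
     <= p ^ (n.-1 * n.-1 + n * n))%N.
Proof.
(* Y is recovered from its residues off row i0 and column j0, by cross_mx_eq0,
   together with its high digits. *)
move=> r_neq0 c_neq0.
pose f (Y : 'M[Z]_n) := (row' i0 (col' j0 (map_mx redp Y)), map_mx hidigit Y).
have -> : (p ^ (n.-1 * n.-1 + n * n))%N = #|{: 'M['F_p]_n.-1 * 'M['I_p]_n}|.
  by rewrite card_prod !card_mx card_Fp // card_ord expnD.
apply: (@leq_card_in _ _ f) => Y Y'; rewrite !inE.
move=> /andP [/eqP Yr /eqP cY] /andP [/eqP Y'r /eqP cY'] [minor_eq hidigit_eq].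
have redp_eq : map_mx redp Y = map_mx redp Y'.
  apply/eqP; rewrite -subr_eq0; apply/eqP.
  apply: (cross_mx_eq0 r_neq0 c_neq0).
  - by rewrite mulmxBl Yr Y'r subrr.
  - by rewrite mulmxBr cY cY' subrr.
  apply/matrixP => i j; have := congr1 (fun M : 'M_n.-1 => M i j) minor_eq.
  by rewrite !mxE => ->; rewrite subrr.
apply/matrixP => i j; apply: redp_hidigit_inj.
  by have := congr1 (fun M : 'M_n => M i j) redp_eq; rewrite !mxE.
by have := congr1 (fun M : 'M_n => M i j) hidigit_eq; rewrite !mxE.
Qed.

Lemma cross_twists_kernel (A Y : 'M[Z]_n) (i0 j0 : 'I_n) :
  all (twist_cond p%:R A ^~ Y) (cross_twists i0 j0) ->
  (map_mx redp Y *m map_mx redp (row i0 A)^T == 0) &&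
  (map_mx redp (col j0 A)^T *m map_mx redp Y == 0).
Proof.
move=> /allP conds; rewrite -!map_mxM; apply/andP; split; apply/eqP/matrixP => i j.
  have := conds (delta_mx i0 i, 0); rewrite mem_cat map_f ?mem_enum // => /(_ isT).
  by rewrite /twist_cond mulmx0 addr0 mxform_delta_mul -redp_eq0 !mxE ord1 => /eqP.
have := conds (0, delta_mx j j0); rewrite mem_cat orbC map_f ?mem_enum // => /(_ isT).
by rewrite /twist_cond mul0mx add0r mxform_mul_delta -redp_eq0 !mxE ord1 => /eqP.
Qed.

End Residues.

Lemma normr_sum_le_card (F : numDomainType) (T : finType) (P : {pred T}) (g : T -> F) :
  (forall x, `|g x| = 1) -> `|\sum_(x in P) g x| <= #|P|%:R.
Proof.
move=> g_norm; apply: le_trans (ler_norm_sum _ _ _) _.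
by rewrite (eq_bigr (fun _ => 1)) ?sumr_const // => x _; rewrite g_norm.
Qed.

Lemma Sp2_abs_Zp (R : realType) n p (a : 'M[int]_n) : prime p ->
  (@Sp2_abs R n p a)%:C%C =
  `|\sum_(Y : 'M['Z_(p ^ 2)]_n | \det Y == 0) @Zp_char (p ^ 2) R (mxform (map_mx intr a) Y)|.
Proof.
move=> p_pr; have p2_gt1 := p2_gt1 p_pr.
pose h (X : 'M['I_(p ^ 2)]_n) : 'M['Z_(p ^ 2)]_n := map_mx intr (intmx X).
have h_bij : bijective h.
  apply: inj_card_bij; last by rewrite !card_mx !card_ord Zp_cast.
  move=> X X' /matrixP hXX'; apply/matrixP => i j; apply: ord_inj.
  have := congr1 (@nat_of_ord _) (hXX' i j); rewrite !mxE !val_Zp_nat //.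
  by rewrite !modn_small.
rewrite (reindex h (onW_bij _ h_bij)) /=.
have -> : \sum_(X | \det (h X) == 0) @Zp_char (p ^ 2) R (mxform (map_mx intr a) (h X)) =
          (@Sp2_re R n p a +i* @Sp2_im R n p a)%C.
  rewrite /Sp2_re /Sp2_im -sum_complex; apply: eq_big => X.
    by rewrite det_map_mx (Zp_intr_eq0 p2_gt1).
  by move=> _; rewrite -rmorph_mxform Zp_char_intr.
by rewrite normc_def.
Qed.

Lemma Sp2_abs_le_card (R : realType) n p (a : 'M[int]_n)
    (s : seq ('M['Z_(p ^ 2)]_n * 'M['Z_(p ^ 2)]_n)) : prime p ->
  @Sp2_abs R n p a <=
    #|[pred Y | (\det Y == 0) && all (twist_cond p%:R (map_mx intr a) ^~ Y) s]|%:R.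
Proof.
move=> p_pr; have p2_gt1 := p2_gt1 p_pr.
have pp0 : (p%:R * p%:R : 'Z_(p ^ 2)) = 0 by rewrite -natrM mulnn pchar_Zp.
rewrite -lecR Sp2_abs_Zp // (sum_det0_twist_restrict _ pp0 (prime_gt0 p_pr) _
  (Zp_charD p2_gt1 R) (Zp_char_eq1 p2_gt1 R) s).
  rewrite (rmorph_nat (real_complex R)).
  by apply: normr_sum_le_card => Y; apply: normr_Zp_char.
by rewrite -mulrnA mulnn pchar_Zp.
Qed.

Lemma Sp2_abs_le_cross (R : realType) n p (a : 'M[int]_n) (i0 j0 : 'I_n) :
  prime p -> ~~ (p%:Z %| a i0 j0)%Z ->
  @Sp2_abs R n p a <= (p ^ (n.-1 * n.-1 + n * n))%:R.
Proof.
move=> p_pr a_ndvd; apply: le_trans (Sp2_abs_le_card R a (cross_twists i0 j0) p_pr) _.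
have a_Fp : ((a i0 j0)%:~R : 'F_p) != 0.
  by move: a_ndvd; rewrite (dvdz_pcharf (pchar_Fp p_pr)).
set A := map_mx intr a.
rewrite ler_nat; apply: leq_trans (card_cross_kernel p_pr (i0 := i0) (j0 := j0)
  (r := map_mx (@redp p) (row i0 A)^T) (c := map_mx (@redp p) (col j0 A)^T) _ _);
  last 2 first; [by rewrite !mxE rmorph_int | by rewrite !mxE rmorph_int |].
apply: subset_leq_card; apply/subsetP => Y; rewrite !inE => /andP [_].
exact: cross_twists_kernel.
Qed.

Lemma Sp2_abs_le1 (R : realType) p (a : 'M[int]_1) : prime p -> @Sp2_abs R 1 p a <= 1.
Proof.
move=> p_pr; apply: le_trans (Sp2_abs_le_card R a [::] p_pr) _.
rewrite lern1; apply/card_le1_eqP => X Y; rewrite !inE !andbT !det_mx11.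
by move=> /eqP X0 /eqP Y0; apply/matrixP => i j; rewrite !ord1 X0 Y0.
Qed.

Lemma exprn_le_powR (R : realType) (x y : R) (k : nat) :
  1 <= x -> k%:R <= y -> x ^+ k <= x `^ y.
Proof.
by move=> x_ge1 k_le_y; rewrite -powR_mulrn ?ler_powR // (le_trans ler01).
Qed.

Theorem lemma3p6 (R : realType) (n : nat) (hn : (0 < n)%N) :
  exists C : R, forall (p : nat) (a : 'M[int]_n),
    prime p ->
    (exists i j, ~~ ((p%:Z %| a i j)%Z)) ->
    @Sp2_abs R n p a <= C * (p%:R `^ ((2 * n ^ 2)%:R - (n + 3)%:R / 2)).
Proof.
exists 1 => p a p_pr [i0 [j0 a_ndvd]]; rewrite mul1r.
have p_ge1 : 1 <= (p%:R : R) by rewrite ler1n prime_gt0.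
case: (ltngtP n 1) => [n_lt1 | n_gt1 | n1]; first by rewrite ltnNge hn in n_lt1.
  apply: le_trans (Sp2_abs_le_cross R p_pr a_ndvd) _.
  rewrite natrX exprn_le_powR //.
  have exp_le : (2 * (n.-1 * n.-1 + n * n) + (n + 3) <= 2 * (2 * n ^ 2))%N by nia.
  by move: exp_le; rewrite -(ler_nat R) !natrD !natrM; lra.
subst n; apply: le_trans (Sp2_abs_le1 R a p_pr) _.
by rewrite [X in _ `^ X](_ : _ = 0) ?powRr0 //=; lra.
Qed.
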